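(* Fix $\gamma\in(0,1]$ and $0<\alpha<0.25$, and let $\xi>0$ be an arbitrarily small number. Then for all sufficiently large $N$, $$\mathbb E\big[\|S-s^*\|^2\big]\le\frac{1}{N^{1-4\alpha-7\xi}}.$$
   Context: Model. Let $N\ge1$ be the number of servers, $\gamma\in(0,1]$ and $\alpha>0$ constants, and $\lambda=1-\gamma/N^{\alpha}$. Let $b=b(N)\ge1$ be an integer buffer size with $b=O(\log N)$. Each of the $N$ servers holds at most $b$ jobs; jobs arrive as a Poisson process of rate $\lambda N$, service times are i.i.d. exponential with rate $1$, and each arriving job samples two servers uniformly at random and joins the one with fewer jobs (ties broken uniformly). Let $S_i(t)$ be the fraction of servers with at least $i$ jobs; $S(t)=(S_1(t),\dots,S_b(t))$ is a continuous-time Markov chain on $\{s\in\{0,\frac1N,\dots,1\}^b:1\ge s_1\ge\cdots\ge s_b\ge0\}$ with, using $s_0=1$, $s_{b+1}=0$ and $e_k$ the $k$-th unit vector, transitions $s\to s+e_k/N$ at rate $\lambda N(s_{k-1}^2-s_k^2)$ and $s\to s-e_k/N$ at rate $N(s_k-s_{k+1})$. $S$ denotes a random vector with the stationary distribution of this chain. $s^*$ is the unique point of $\mathcal S=\{s\in\mathbb R^b:1\ge s_1\ge\cdots\ge s_b\ge0\}$ with $f(s^* )=0$, where $f_k(s)=\lambda(s_{k-1}^2-s_k^2)-(s_k-s_{k+1})$ (with $s_0=1,s_{b+1}=0$). $\|\cdot\|$ is the Euclidean norm. *)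

From HB Require Import structures.
From mathcomp Require Import all_boot all_order all_algebra.
From mathcomp Require Import all_classical all_reals all_analysis.
Set Implicit Arguments. Unset Strict Implicit. Unset Printing Implicit Defensive.
Import Order.TTheory GRing.Theory Num.Theory.
Local Open Scope ring_scope.

(* A microscopic state: for i : 'I_b, x i = number of servers with at least
   i+1 jobs (so S_{i+1} = x i / N).  Valid states are nonincreasing. *)
Definition state_ok (N b : nat) (x : {ffun 'I_b -> 'I_N.+1}) : bool :=
  [forall i : 'I_b, forall j : 'I_b, (i <= j)%N ==> (x j <= x i)%N].

Definition state (N b : nat) := {x : {ffun 'I_b -> 'I_N.+1} | state_ok x}.

(* s_k for k : nat, with s_0 = 1 and s_k = 0 for k > b. *)
Definition sfrac (R : realType) (N b : nat) (x : {ffun 'I_b -> 'I_N.+1}) (k : nat) : R :=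
  if k == 0%N then 1
  else nth 0 [seq ((x i : nat)%:R / N%:R : R) | i <- enum 'I_b] k.-1.

Definition lambdaN (R : realType) (gamma alpha : R) (N : nat) : R :=
  1 - gamma / (N%:R `^ alpha).

(* Transition rate from x to y (x <> y): s -> s + e_k/N at rate
   lam N (s_{k-1}^2 - s_k^2), s -> s - e_k/N at rate N (s_k - s_{k+1}),
   with k = i+1 for i : 'I_b. *)
Definition rate (R : realType) (N b : nat) (lam : R)
    (x y : {ffun 'I_b -> 'I_N.+1}) : R :=
  \sum_(i < b)
    ((if [forall j : 'I_b, (y j : nat) == (x j + (j == i))%N]
      then lam * N%:R * (sfrac R x i ^+ 2 - sfrac R x i.+1 ^+ 2) else 0)
   + (if [forall j : 'I_b, ((y j : nat) + (j == i))%N == x j]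
      then N%:R * (sfrac R x i.+1 - sfrac R x i.+2) else 0)).

Definition is_stationary (R : realType) (N b : nat) (lam : R)
    (pi : state N b -> R) : Prop :=
  (forall x, 0 <= pi x) /\ (\sum_x pi x = 1) /\
  (forall y : state N b,
     \sum_(x | x != y) pi x * rate lam (val x) (val y)
     = pi y * \sum_(z | z != y) rate lam (val y) (val z)).

(* Coordinates of a real vector s : 'I_b -> R, extended by s_0 = 1, s_{b+1}=0. *)
Definition sext (R : realType) (b : nat) (s : 'I_b -> R) (k : nat) : R :=
  if k == 0%N then 1 else nth 0 [seq s i | i <- enum 'I_b] k.-1.

Definition fdrift (R : realType) (b : nat) (lam : R) (s : 'I_b -> R) (k : nat) : R :=
  lam * (sext s k.-1 ^+ 2 - sext s k ^+ 2) - (sext s k - sext s k.+1).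

Definition is_fixed_point (R : realType) (b : nat) (lam : R) (s : 'I_b -> R) : Prop :=
  (forall k : nat, (k <= b)%N -> sext s k.+1 <= sext s k) /\
  (forall i : 'I_b, fdrift lam s i.+1 = 0).

From HB Require Import structures.
From mathcomp Require Import all_boot all_order all_algebra.
From mathcomp Require Import all_classical all_reals all_analysis.
From mathcomp Require Import ring lra zify.
Set Implicit Arguments. Unset Strict Implicit. Unset Printing Implicit Defensive.
Import Order.TTheory GRing.Theory Num.Theory.
Local Open Scope ring_scope.

(* For any function V of the state, the generator of the
   chain applied to V has mean zero under a stationary distribution.  Take
   V(s) = (sum_k v_k h(s_k - s*_k))^2 with h(x) = sqrt(x^2 + eta^2) a smoothed
   absolute value and weights v_k = sum_(i<k) (b - i) / prod_(1<=j<=i) (1 + s*_j).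
   The fixed-point equations give (1 - lambda) prod_(1<=j<=i) (1 + s*_j) <= 1,
   and with these weights the first-order terms of the generator telescope by
   summation by parts, so that it is at most
   -(1 - lambda) ||s - s*||_1^2 + 26 b^10 / ((1 - lambda) N).
   Hence E ||S - s*||^2 <= E ||S - s*||_1^2 <= 26 b^10 N^(2 alpha) / (gamma^2 N),
   and b = O(log N) makes b^10 smaller than any power of N. *)

Section SmoothAbs.
Variable R : rcfType.
Implicit Types (eta x y c : R).

Definition smooth_abs eta x : R := Num.sqrt (x ^+ 2 + eta ^+ 2).

Definition smooth_sgn eta x : R := x / smooth_abs eta x.

Lemma le_of_sqr_le (u w : R) : 0 <= w -> u ^+ 2 <= w ^+ 2 -> u <= w.
Proof. by move=> w0 h; nra. Qed.

Lemma smooth_abs_ge0 eta x : 0 <= smooth_abs eta x.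
Proof. exact: sqrtr_ge0. Qed.

Lemma sqr_smooth_abs eta x : smooth_abs eta x ^+ 2 = x ^+ 2 + eta ^+ 2.
Proof. by rewrite sqr_sqrtr // addr_ge0 // sqr_ge0. Qed.

Lemma norm_le_smooth_abs eta x : `|x| <= smooth_abs eta x.
Proof.
apply: le_of_sqr_le; first exact: smooth_abs_ge0.
by rewrite sqr_smooth_abs real_normK ?num_real // lerDl sqr_ge0.
Qed.

Lemma smooth_abs_ge eta x : 0 <= eta -> eta <= smooth_abs eta x.
Proof.
move=> e0; apply: le_of_sqr_le; first exact: smooth_abs_ge0.
by rewrite sqr_smooth_abs lerDr sqr_ge0.
Qed.

Lemma smooth_abs_gt0 eta x : 0 < eta -> 0 < smooth_abs eta x.
Proof. by move=> e0; apply: lt_le_trans e0 (smooth_abs_ge x (ltW e0)). Qed.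

Lemma smooth_abs_le eta x : 0 <= eta -> smooth_abs eta x <= `|x| + eta.
Proof.
move=> e0; apply: le_of_sqr_le; first by rewrite addr_ge0.
rewrite sqr_smooth_abs -(real_normK (num_real x)).
by have := normr_ge0 x; nra.
Qed.

(* Cauchy-Schwarz for the vectors (|x|, eta) and (|y|, eta). *)
Lemma smooth_abs_mul_ge eta x y :
  `|x * y| + eta ^+ 2 <= smooth_abs eta x * smooth_abs eta y.
Proof.
apply: le_of_sqr_le; first by rewrite mulr_ge0 // smooth_abs_ge0.
rewrite exprMn !sqr_smooth_abs normrM.
rewrite -(real_normK (num_real x)) -(real_normK (num_real y)).
have := sqr_ge0 (eta * (`|x| - `|y|)); set a := `|x|; set b := `|y| => h.
have -> : (a * b + eta ^+ 2) ^+ 2 =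
  (a ^+ 2 + eta ^+ 2) * (b ^+ 2 + eta ^+ 2) - (eta * (a - b)) ^+ 2 by ring.
lra.
Qed.

Lemma smooth_abs_lipschitz eta x y :
  `|smooth_abs eta y - smooth_abs eta x| <= `|y - x|.
Proof.
rewrite -[`|_ - smooth_abs _ _|]sqrtr_sqr -[`|y - x|]sqrtr_sqr ler_sqrt ?sqr_ge0 //.
have := smooth_abs_mul_ge eta x y; have := ler_norm (x * y).
have := sqr_smooth_abs eta x; have := sqr_smooth_abs eta y.
set A := smooth_abs eta x; set B := smooth_abs eta y => hB hA hn hp.
have -> : (B - A) ^+ 2 = B ^+ 2 + A ^+ 2 - 2 * (A * B) by ring.
rewrite hA hB; nra.
Qed.

Lemma norm_smooth_sgn_le1 eta x : 0 < eta -> `|smooth_sgn eta x| <= 1.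
Proof.
move=> e0; have hp := smooth_abs_gt0 x e0.
rewrite /smooth_sgn normrM normfV (gtr0_norm hp) ler_pdivrMr // mul1r.
exact: norm_le_smooth_abs.
Qed.

Lemma smooth_sgn_mul_le_norm eta x y : 0 < eta -> smooth_sgn eta x * y <= `|y|.
Proof.
move=> e0; apply: le_trans (ler_norm _) _; rewrite normrM.
by have := norm_smooth_sgn_le1 x e0; have := normr_ge0 y; nra.
Qed.

Lemma smooth_sgn_mul_ge eta x : 0 < eta -> `|x| - eta <= smooth_sgn eta x * x.
Proof.
move=> e0; have hp := smooth_abs_gt0 x e0.
rewrite /smooth_sgn mulrAC -expr2 ler_pdivlMr // -(real_normK (num_real x)).
have := smooth_abs_le x (ltW e0); have := normr_ge0 x.
set A := smooth_abs eta x in hp *; set a := `|x| => a0 hA.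
case: (lerP a eta) => hx; first by have := sqr_ge0 a; nra.
have : (a - eta) * A <= (a - eta) * (a + eta) by rewrite ler_pM2l ?subr_gt0.
by have := sqr_ge0 eta; nra.
Qed.

(* The second derivative of [smooth_abs eta] is at most [1 / eta]. *)
Lemma smooth_abs_taylor eta x c : 0 < eta ->
  smooth_abs eta (x + c) <= smooth_abs eta x + smooth_sgn eta x * c + c ^+ 2 / (2 * eta).
Proof.
move=> e0.
have hA : eta <= smooth_abs eta x := smooth_abs_ge x (ltW e0).
have hp : 0 < smooth_abs eta x := smooth_abs_gt0 x e0.
have hpr := smooth_abs_mul_ge eta x (x + c).
have hsA := sqr_smooth_abs eta x; have hsB := sqr_smooth_abs eta (x + c).
set A := smooth_abs eta x in hA hp hpr hsA *.
set B := smooth_abs eta (x + c) in hpr hsB *.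
set m := x * (x + c) + eta ^+ 2.
have hm : 2 * eta ^+ 2 <= A * B + m.
  have := ler_norm (- (x * (x + c))); rewrite normrN /m; lra.
(* [(A B)^2 - m^2 = (eta c)^2] and [A B + m >= 2 eta^2]. *)
have hABm : A * B - m <= c ^+ 2 / 2.
  have h1 : (A * B - m) * (A * B + m) = eta ^+ 2 * c ^+ 2.
    by rewrite -subr_sqr exprMn hsA hsB /m; ring.
  have he : 0 < eta ^+ 2 by rewrite exprn_gt0.
  by have := sqr_ge0 c; nra.
have eA : A * (B - A - smooth_sgn eta x * c) = A * B - m.
  have -> : A * (B - A - x / A * c) = A * B - A ^+ 2 - x * c.
    by field; rewrite gt_eqF.
  by rewrite hsA /m; ring.
have : A * (B - A - smooth_sgn eta x * c) <= A * (c ^+ 2 / (2 * eta)).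
  rewrite eA; apply: le_trans hABm _.
  rewrite [X in _ <= X](_ : _ = A / eta * (c ^+ 2 / 2)); last by field; rewrite gt_eqF.
  by rewrite ler_peMl ?divr_ge0 ?sqr_ge0 // ler_pdivlMr // mul1r.
rewrite ler_pM2l //; lra.
Qed.

End SmoothAbs.

Lemma sumr_ord_shift (V : zmodType) (F : nat -> V) n :
  \sum_(i < n) F i.+1 = \sum_(i < n) F i + F n - F 0%N.
Proof.
elim: n => [|n IH]; first by rewrite !big_ord0 add0r subrr.
by rewrite big_ord_recr /= IH big_ord_recr /= addrAC.
Qed.

Lemma sum_sqr_le_sqr_sum_norm (R : realDomainType) n (F : nat -> R) :
  \sum_(i < n) F i ^+ 2 <= (\sum_(i < n) `|F i|) ^+ 2.
Proof.
elim: n => [|n IH]; first by rewrite !big_ord0 expr0n.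
rewrite !big_ord_recr /= -(real_normK (num_real (F n))).
have S0 : 0 <= \sum_(i < n) `|F i| by rewrite sumr_ge0.
by have := normr_ge0 (F n); nra.
Qed.

Section Weights.
Variable R : realFieldType.
Variables (b : nat) (t : nat -> R).
Hypothesis t_ge0 : forall k, 0 <= t k.

Definition cumprod (j : nat) : R := \prod_(i < j) (1 + t i.+1).

Definition weight (k : nat) : R := \sum_(i < k) (b - i)%:R / cumprod i.

Lemma cumprodS i : cumprod i.+1 = cumprod i * (1 + t i.+1).
Proof. by rewrite /cumprod big_ord_recr. Qed.

Lemma cumprod_ge1 i : 1 <= cumprod i.
Proof.
elim: i => [|i IH]; first by rewrite /cumprod big_ord0.
by rewrite cumprodS; have := t_ge0 i.+1; nra.
Qed.

Lemma cumprod_gt0 i : 0 < cumprod i.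
Proof. exact: lt_le_trans ltr01 (cumprod_ge1 i). Qed.

Lemma cumprod_ge0 i : 0 <= cumprod i.
Proof. exact: ltW (cumprod_gt0 i). Qed.

Lemma weight0 : weight 0 = 0.
Proof. by rewrite /weight big_ord0. Qed.

Lemma weightS i : weight i.+1 = weight i + (b - i)%:R / cumprod i.
Proof. by rewrite /weight big_ord_recr. Qed.

Lemma weight_ge0 k : 0 <= weight k.
Proof.
by rewrite /weight sumr_ge0 // => i _; rewrite divr_ge0 ?cumprod_ge0.
Qed.

Lemma weight_ge1 k : (1 <= b)%N -> (1 <= k)%N -> 1 <= weight k.
Proof.
move=> hb; case: k => // k _; elim: k => [|k IH].
  by rewrite weightS weight0 /cumprod big_ord0 add0r divr1 subn0 ler1n.
by rewrite weightS; apply: le_trans IH _; rewrite lerDl divr_ge0 ?cumprod_ge0.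
Qed.

Lemma weight_le k : weight k <= k%:R * b%:R.
Proof.
elim: k => [|k IH]; first by rewrite weight0 mul0r.
rewrite weightS -natr1 mulrDl mul1r lerD // ler_pdivrMr ?cumprod_gt0 //.
have : (b - k)%:R <= b%:R :> R by rewrite ler_nat leq_subr.
have : 0 <= (b - k)%:R :> R by rewrite ler0n.
by have := cumprod_ge1 k; nra.
Qed.

Lemma weight_le_sqr i : (i < b)%N -> weight i.+1 <= b%:R ^+ 2.
Proof.
by move=> hi; apply: le_trans (weight_le i.+1) _; rewrite expr2 ler_wpM2r ?ler_nat.
Qed.

Lemma sum_weight_le : \sum_(i < b) weight i.+1 <= b%:R ^+ 3.
Proof.
apply: le_trans (ler_sum _ (fun (i : 'I_b) _ => weight_le_sqr (ltn_ord i))) _.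
by rewrite sumr_const card_ord [in X in _ <= X]exprSr mulr_natr.
Qed.

Lemma sum_sqr_weight_le : \sum_(i < b) weight i.+1 ^+ 2 <= b%:R ^+ 5.
Proof.
have h (i : 'I_b) : weight i.+1 ^+ 2 <= b%:R ^+ 4.
  by rewrite (exprM _ 2 2) lerXn2r ?nnegrE ?weight_ge0 ?exprn_ge0 ?weight_le_sqr.
apply: le_trans (ler_sum _ (fun (i : 'I_b) _ => h i)) _.
by rewrite sumr_const card_ord [in X in _ <= X]exprSr mulr_natr.
Qed.

End Weights.

Lemma smooth_sgn_drift_le (R : rcfType) (eta lam v s0 s1 s2 t0 t1 t2 : R) :
  0 < eta -> 0 <= lam <= 1 -> 0 <= v -> 0 <= s1 <= 1 -> 0 <= t1 <= 1 ->
  lam * (t0 ^+ 2 - t1 ^+ 2) - (t1 - t2) = 0 ->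
  v * (smooth_sgn eta (s1 - t1) * (lam * (s0 ^+ 2 - s1 ^+ 2) - (s1 - s2))) <=
  v * (lam * `|s0 ^+ 2 - t0 ^+ 2| - lam * `|s1 ^+ 2 - t1 ^+ 2|
       - `|s1 - t1| + `|s2 - t2|) + 3 * eta * v.
Proof.
move=> e0 /andP[l0 l1] v0 /andP[s10 s11] /andP[t10 t11] fp.
set sig := smooth_sgn eta (s1 - t1).
have -> : lam * (s0 ^+ 2 - s1 ^+ 2) - (s1 - s2) =
  lam * (s0 ^+ 2 - t0 ^+ 2) - lam * (s1 + t1) * (s1 - t1) - (s1 - t1) + (s2 - t2).
  by rewrite -[LHS]subr0 -fp; ring.
have -> : `|s1 ^+ 2 - t1 ^+ 2| = (s1 + t1) * `|s1 - t1|.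
  by rewrite -(ger0_norm (addr_ge0 s10 t10)) -normrM; congr `|_|; ring.
have h0 := smooth_sgn_mul_le_norm (s1 - t1) (s0 ^+ 2 - t0 ^+ 2) e0.
have h1 := smooth_sgn_mul_ge (s1 - t1) e0.
have h2 := smooth_sgn_mul_le_norm (s1 - t1) (s2 - t2) e0.
rewrite -/sig in h0 h1 h2; rewrite [3 * eta * v]mulrC -mulrDr ler_wpM2l //.
set a := s1 + t1; have a0 : 0 <= a by rewrite addr_ge0.
have la : lam * a <= 2 by rewrite /a; nra.
set d := `|s1 - t1| in h1 *.
have k1 : lam * a * (d - eta) <= lam * a * (sig * (s1 - t1)).
  by rewrite ler_wpM2l // mulr_ge0.
have k3 : sig * (lam * (s0 ^+ 2 - t0 ^+ 2)) <= lam * `|s0 ^+ 2 - t0 ^+ 2|.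
  by rewrite mulrCA ler_wpM2l.
have k2 : lam * a * eta <= 2 * eta by rewrite ler_wpM2r // ltW.
have -> : sig * (lam * (s0 ^+ 2 - t0 ^+ 2) - lam * a * (s1 - t1) - (s1 - t1) + (s2 - t2))
  = sig * (lam * (s0 ^+ 2 - t0 ^+ 2)) - lam * a * (sig * (s1 - t1))
    - sig * (s1 - t1) + sig * (s2 - t2) by ring.
lra.
Qed.

Lemma telescope_term_le (R : realFieldType) (lam m q tt ss : R) :
  0 <= lam <= 1 -> 0 <= m -> 1 <= q -> 0 <= tt <= 1 -> 0 <= ss <= 1 ->
  (1 - lam) * q <= 1 ->
  m / (q * (1 + tt)) * (lam * `|ss ^+ 2 - tt ^+ 2|) - (m + 1) / q * `|ss - tt|
  <= - (1 - lam) * `|ss - tt|.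
Proof.
move=> /andP[l0 l1] m0 q1 /andP[t0 t1] /andP[s0 s1] hq.
have q0 : 0 < q by apply: lt_le_trans q1.
have tp : 0 < 1 + tt by lra.
have -> : `|ss ^+ 2 - tt ^+ 2| = (ss + tt) * `|ss - tt|.
  by rewrite -(ger0_norm (addr_ge0 s0 t0)) -normrM; congr `|_|; ring.
set d := `|ss - tt|; have d0 : 0 <= d := normr_ge0 _.
have k1 : lam * ((ss + tt) * d) <= (1 + tt) * d.
  by rewrite mulrA ler_wpM2r //; nra.
have k2 : m / (q * (1 + tt)) * (lam * ((ss + tt) * d)) <= m / q * d.
  have -> : m / q * d = m / (q * (1 + tt)) * ((1 + tt) * d).
    by field; rewrite !gt_eqF.
  by rewrite ler_wpM2l // divr_ge0 // mulr_ge0 // ltW.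
have k3 : (1 - lam) * d <= d / q by rewrite ler_pdivlMr // mulrAC ler_piMl.
have -> : (m + 1) / q * d = m / q * d + d / q by field; rewrite gt_eqF.
lra.
Qed.

Section Telescope.
Variable R : realFieldType.
Variables (b : nat) (lam : R) (s t : nat -> R).
Hypothesis lam01 : 0 <= lam <= 1.
Hypotheses (s0 : s 0%N = 1) (t0 : t 0%N = 1) (sb : s b.+1 = 0) (tb : t b.+1 = 0).
Hypotheses (s01 : forall k, 0 <= s k <= 1) (t01 : forall k, 0 <= t k <= 1).
Hypothesis cumprod_le : forall i, (i <= b)%N -> (1 - lam) * cumprod t i <= 1.

Let t_ge0 k : 0 <= t k. Proof. by case/andP: (t01 k). Qed.
Let P j := lam * `|s j ^+ 2 - t j ^+ 2|.
Let D j := `|s j - t j|.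
Let v := weight b t.

(* Summation by parts; the weights are tuned so that each resulting term is
   controlled by [telescope_term_le]. *)
Lemma weighted_telescope_le :
  \sum_(i < b) v i.+1 * (P i - P i.+1 - D i.+1 + D i.+2)
  <= - (1 - lam) * \sum_(i < b) D i.+1.
Proof.
have P0 : P 0 = 0 by rewrite /P s0 t0 expr1n subrr normr0 mulr0.
have Db : D b.+1 = 0 by rewrite /D sb tb subrr normr0.
have eP := sumr_ord_shift (fun j => v j.+1 * P j) b.
have eD := sumr_ord_shift (fun j => v j * D j.+1) b.
rewrite /= P0 mulr0 subr0 in eP; rewrite /= Db /v weight0 mulr0 mul0r addr0 subr0 in eD.
have hPb : 0 <= v b.+1 * P b.
  by rewrite mulr_ge0 ?weight_ge0 // mulr_ge0 //; case/andP: lam01.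
have sum4 (F1 F2 F3 F4 : 'I_b -> R) :
    \sum_(i < b) (F1 i - F2 i - F3 i + F4 i) =
    \sum_(i < b) F1 i - \sum_(i < b) F2 i - \sum_(i < b) F3 i + \sum_(i < b) F4 i.
  by rewrite big_split /= !sumrB.
have -> : \sum_(i < b) v i.+1 * (P i - P i.+1 - D i.+1 + D i.+2) =
  \sum_(i < b) ((v i.+2 - v i.+1) * P i.+1 - (v i.+1 - v i) * D i.+1) - v b.+1 * P b.
  rewrite (eq_bigr (fun i : 'I_b => v i.+1 * P i - v i.+1 * P i.+1
    - v i.+1 * D i.+1 + v i.+1 * D i.+2)); last by move=> i _; ring.
  rewrite [X in _ = X - _](eq_bigr (fun i : 'I_b => v i.+2 * P i.+1 - v i.+1 * P i.+1
    - v i.+1 * D i.+1 + v i * D i.+1)); last by move=> i _; ring.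
  by rewrite /= !sum4 eP eD; ring.
suff : \sum_(i < b) ((v i.+2 - v i.+1) * P i.+1 - (v i.+1 - v i) * D i.+1)
       <= - (1 - lam) * \sum_(i < b) D i.+1 by lra.
rewrite mulr_sumr; apply: ler_sum => i _.
have -> : v i.+2 - v i.+1 = (b - i.+1)%:R / cumprod t i.+1 by rewrite /v weightS; ring.
have -> : v i.+1 - v i = (b - i)%:R / cumprod t i by rewrite /v weightS; ring.
rewrite cumprodS.
have -> : (b - i)%:R = (b - i.+1)%:R + 1 :> R by rewrite -(subnSK (ltn_ord i)) natr1.
apply: telescope_term_le => //; rewrite ?ler0n ?cumprod_ge1 ?cumprod_le //.
exact: ltnW.
Qed.

End Telescope.

Definition shift_at (R : zmodType) (s : nat -> R) (k : nat) (c : R) : nat -> R :=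
  fun j => if j == k then s j + c else s j.

Section Lyapunov.
Variable R : rcfType.
Variables (b : nat) (t : nat -> R) (eta : R).
Hypotheses (t_ge0 : forall k, 0 <= t k) (eta_gt0 : 0 < eta).

Definition dist1 (s : nat -> R) : R := \sum_(i < b) `|s i.+1 - t i.+1|.

Definition wdist (s : nat -> R) : R :=
  \sum_(i < b) weight b t i.+1 * smooth_abs eta (s i.+1 - t i.+1).

Definition lyap (s : nat -> R) : R := wdist s ^+ 2.

Definition lyap_drift (lam n : R) (s : nat -> R) : R :=
  \sum_(i < b) (lam * n * (s i ^+ 2 - s i.+1 ^+ 2)
                  * (lyap (shift_at s i.+1 n^-1) - lyap s)
              + n * (s i.+1 - s i.+2) * (lyap (shift_at s i.+1 (- n^-1)) - lyap s)).

Lemma lyap_ext s s' : (forall k, (k < b)%N -> s k.+1 = s' k.+1) -> lyap s = lyap s'.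
Proof.
by move=> h; rewrite /lyap /wdist; congr (_ ^+ 2); apply: eq_bigr => i _; rewrite h.
Qed.

Lemma wdist_ge0 s : 0 <= wdist s.
Proof. by rewrite sumr_ge0 // => i _; rewrite mulr_ge0 ?weight_ge0 ?smooth_abs_ge0. Qed.

Lemma wdist_shift_at s i c : (i < b)%N ->
  wdist (shift_at s i.+1 c) = wdist s +
    weight b t i.+1 *
      (smooth_abs eta (s i.+1 - t i.+1 + c) - smooth_abs eta (s i.+1 - t i.+1)).
Proof.
move=> hi; rewrite /wdist (bigD1 (Ordinal hi)) //= [in RHS](bigD1 (Ordinal hi)) //=.
rewrite /shift_at eqxx addrAC.
rewrite (eq_bigr (fun j : 'I_b => weight b t j.+1 * smooth_abs eta (s j.+1 - t j.+1))).
  by ring.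
by move=> j hj; rewrite eqSS ifN.
Qed.

Lemma lyap_shift_at_le s i c : (i < b)%N ->
  lyap (shift_at s i.+1 c) - lyap s <=
  2 * wdist s * weight b t i.+1 *
    (smooth_sgn eta (s i.+1 - t i.+1) * c + c ^+ 2 / (2 * eta))
  + weight b t i.+1 ^+ 2 * c ^+ 2.
Proof.
move=> hi; rewrite /lyap wdist_shift_at //.
have hH := wdist_ge0 s; have hv := weight_ge0 b t_ge0 i.+1.
set H := wdist s in hH *; set v := weight b t i.+1 in hv *.
set x := s i.+1 - t i.+1.
have hT := smooth_abs_taylor x c eta_gt0.
set D := smooth_abs eta (x + c) - smooth_abs eta x.
have hL : `|D| <= `|c|.
  by have := smooth_abs_lipschitz eta x (x + c); rewrite [x + c - x]addrC addKr.
have hD : D <= smooth_sgn eta x * c + c ^+ 2 / (2 * eta) by rewrite /D; lra.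
have hD2 : D ^+ 2 <= c ^+ 2.
  rewrite -(real_normK (num_real D)) -(real_normK (num_real c)).
  by rewrite ler_sqr ?nnegrE ?normr_ge0.
have -> : (H + v * D) ^+ 2 - H ^+ 2 = 2 * H * v * D + v ^+ 2 * D ^+ 2 by ring.
by rewrite lerD // ler_wpM2l ?mulr_ge0 ?sqr_ge0.
Qed.

Lemma dist1_le_wdist s : (1 <= b)%N -> dist1 s <= wdist s.
Proof.
move=> hb; apply: ler_sum => i _; apply: le_trans (norm_le_smooth_abs eta _) _.
by rewrite ler_peMl ?smooth_abs_ge0 ?weight_ge1.
Qed.

Lemma wdist_le s :
  wdist s <= b%:R ^+ 2 * dist1 s + eta * \sum_(i < b) weight b t i.+1.
Proof.
rewrite /wdist /dist1 !mulr_sumr -big_split /=; apply: ler_sum => i _.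
have hv := weight_le_sqr t_ge0 (ltn_ord i); have hv0 := weight_ge0 b t_ge0 i.+1.
have := smooth_abs_le (s i.+1 - t i.+1) (ltW eta_gt0).
by have := normr_ge0 (s i.+1 - t i.+1); nra.
Qed.

End Lyapunov.

Lemma drift_amgm (R : realFieldType) (eps eta n B L H Sv Sv2 D G : R) :
  0 < eps -> 0 < eta -> 0 < n -> eta ^+ 2 * n = 1 ->
  0 <= L <= H -> H <= B ^+ 2 * L + eta * Sv -> 0 <= Sv ->
  D <= - eps * L + 3 * eta * Sv ->
  G <= 2 * H * D + 2 * H * eta * Sv + 2 * Sv2 / n ->
  G <= - eps * L ^+ 2 + (16 * Sv ^+ 2 * B ^+ 4 / eps + 8 * Sv ^+ 2 + 2 * Sv2) / n.
Proof.
move=> e0 eta0 n0 etan /andP[L0 LH] HU Sv0 hD hG.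
have H0 : 0 <= H by apply: le_trans LH.
have eta2 : eta ^+ 2 = n^-1 by rewrite -[n^-1]mul1r -etan mulfK ?gt_eqF.
set e := 4 * eta * Sv; have e0' : 0 <= e by rewrite !mulr_ge0 // ltW.
have G1 : G <= 2 * H * (- eps * L + e) + 2 * Sv2 / n.
  have : 2 * H * D <= 2 * H * (- eps * L + 3 * eta * Sv) by rewrite ler_wpM2l ?mulr_ge0.
  by rewrite /e; lra.
have G2 : 2 * H * (- eps * L + e) <= - 2 * eps * L ^+ 2 + 2 * e * (B ^+ 2 * L + eta * Sv).
  have k1 : eps * L * L <= eps * L * H by rewrite ler_wpM2l // mulr_ge0 // ltW.
  have k2 : e * H <= e * (B ^+ 2 * L + eta * Sv) by rewrite ler_wpM2l.
  nra.
have G3 : 2 * e * B ^+ 2 * L <= eps * L ^+ 2 + e ^+ 2 * B ^+ 4 / eps.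
  rewrite -(ler_pM2l e0).
  have -> : eps * (eps * L ^+ 2 + e ^+ 2 * B ^+ 4 / eps) = (eps * L) ^+ 2 + (e * B ^+ 2) ^+ 2.
    by field; rewrite gt_eqF.
  by have := sqr_ge0 (eps * L - e * B ^+ 2); nra.
have -> : (16 * Sv ^+ 2 * B ^+ 4 / eps + 8 * Sv ^+ 2 + 2 * Sv2) / n =
    e ^+ 2 * B ^+ 4 / eps + 2 * e * (eta * Sv) + 2 * Sv2 / n.
  by rewrite /e -[n^-1]eta2; field; rewrite gt_eqF.
lra.
Qed.

Lemma drift_remainder_le (R : realFieldType) (eps n B Sv Sv2 : R) :
  0 < eps <= 1 -> 0 < n -> 1 <= B -> 0 <= Sv <= B ^+ 3 -> Sv2 <= B ^+ 5 ->
  (16 * Sv ^+ 2 * B ^+ 4 / eps + 8 * Sv ^+ 2 + 2 * Sv2) / n <= 26 * B ^+ 10 / (eps * n).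
Proof.
move=> /andP[e0 e1] n0 B1 /andP[Sv0 Sv3] Sv5.
have -> : 26 * B ^+ 10 / (eps * n) = (26 * B ^+ 10 / eps) / n by rewrite invfM mulrA.
rewrite ler_pM2r ?invr_gt0 //.
have B0 : 0 <= B by apply: le_trans B1.
have S6 : Sv ^+ 2 <= B ^+ 6 by rewrite (exprM _ 3 2) lerXn2r ?nnegrE ?exprn_ge0.
have B6 : B ^+ 6 <= B ^+ 10 by exact: ler_weXn2l.
have B5 : B ^+ 5 <= B ^+ 10 by exact: ler_weXn2l.
have k1 : 16 * Sv ^+ 2 * B ^+ 4 / eps <= 16 * B ^+ 10 / eps.
  have B4 : 0 <= B ^+ 4 by rewrite exprn_ge0.
  have -> : B ^+ 10 = B ^+ 6 * B ^+ 4 by rewrite -exprD.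
  by rewrite ler_pM2r ?invr_gt0 //; nra.
have k2 : B ^+ 10 <= B ^+ 10 / eps.
  by rewrite ler_pdivlMr // ler_piMr ?exprn_ge0.
lra.
Qed.

Section Drift.
Variable R : rcfType.
Variables (b : nat) (lam n eta : R) (t s : nat -> R).
Hypotheses (b_gt0 : (1 <= b)%N) (lam01 : 0 <= lam < 1).
Hypotheses (n_gt0 : 0 < n) (eta_gt0 : 0 < eta) (eta_n : eta ^+ 2 * n = 1).
Hypotheses (s0 : s 0%N = 1) (s01 : forall k, 0 <= s k <= 1).
Hypotheses (s_nonincr : forall k, s k.+1 <= s k) (sb : s b.+1 = 0).
Hypotheses (t0 : t 0%N = 1) (t01 : forall k, 0 <= t k <= 1) (tb : t b.+1 = 0).
Hypothesis t_fixed :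
  forall i, (i < b)%N -> lam * (t i ^+ 2 - t i.+1 ^+ 2) - (t i.+1 - t i.+2) = 0.
Hypothesis cumprod_le : forall i, (i <= b)%N -> (1 - lam) * cumprod t i <= 1.

Let t_ge0 k : 0 <= t k. Proof. by case/andP: (t01 k). Qed.
Local Notation v i := (weight b t i.+1).
Local Notation sig i := (smooth_sgn eta (s i.+1 - t i.+1)).
Local Notation H := (wdist b t eta s).
Local Notation L := (dist1 b t s).
Local Notation V := (lyap b t eta).

Lemma lyap_drift_term_le i : (i < b)%N ->
  lam * n * (s i ^+ 2 - s i.+1 ^+ 2) * (V (shift_at s i.+1 n^-1) - V s)
  + n * (s i.+1 - s i.+2) * (V (shift_at s i.+1 (- n^-1)) - V s)
  <= 2 * H * (v i * (sig i * (lam * (s i ^+ 2 - s i.+1 ^+ 2) - (s i.+1 - s i.+2))))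
     + 2 * (H * eta * v i + v i ^+ 2 / n).
Proof.
move=> hi; have [l0 l1] := andP lam01.
have hn : n = (eta ^+ 2)^-1 by rewrite -[RHS]mulr1 -eta_n mulKf // expf_neq0 // gt_eqF.
have j1 := lyap_shift_at_le t_ge0 eta_gt0 s n^-1 hi.
have j2 := lyap_shift_at_le t_ge0 eta_gt0 s (- n^-1) hi.
have hH := wdist_ge0 b eta t_ge0 s; have hv := weight_ge0 b t_ge0 i.+1.
set A := s i ^+ 2 - s i.+1 ^+ 2 in j1 j2 *; set B := s i.+1 - s i.+2 in j1 j2 *.
have [A0 A1] : 0 <= A /\ lam * A <= 1.
  have := s_nonincr i; case/andP: (s01 i) => ? ?; case/andP: (s01 i.+1) => ? ?.
  by rewrite /A; split; nra.
have [B0 B1] : 0 <= B /\ B <= 1.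
  have := s_nonincr i.+1; case/andP: (s01 i.+1) => ? ?; case/andP: (s01 i.+2) => ? ?.
  by rewrite /B; split; lra.
have U0 : 0 <= lam * n * A by rewrite !mulr_ge0 // ltW.
have D0 : 0 <= n * B by rewrite mulr_ge0 // ltW.
apply: le_trans (lerD (ler_wpM2l U0 j1) (ler_wpM2l D0 j2)) _.
have -> : forall (H v sg : R),
  lam * n * A * (2 * H * v * (sg * n^-1 + n^-1 ^+ 2 / (2 * eta)) + v ^+ 2 * n^-1 ^+ 2)
  + n * B * (2 * H * v * (sg * - n^-1 + (- n^-1) ^+ 2 / (2 * eta)) + v ^+ 2 * (- n^-1) ^+ 2)
  = 2 * H * (v * (sg * (lam * A - B))) + (lam * A + B) * (H * eta * v + v ^+ 2 / n).
  by move=> H v sg; rewrite hn; field; rewrite gt_eqF.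
rewrite lerD2l ler_wpM2r //; last lra.
apply: addr_ge0; first by rewrite !mulr_ge0 // ltW.
by rewrite divr_ge0 ?sqr_ge0 // ltW.
Qed.

Lemma lyap_drift_le_first_order :
  lyap_drift b t eta lam n s <=
  2 * H * \sum_(i < b) v i * (sig i * (lam * (s i ^+ 2 - s i.+1 ^+ 2) - (s i.+1 - s i.+2)))
  + 2 * H * eta * \sum_(i < b) v i + 2 * (\sum_(i < b) v i ^+ 2) / n.
Proof.
apply: le_trans (ler_sum _ (fun (i : 'I_b) _ => lyap_drift_term_le (ltn_ord i))) _.
rewrite big_split /= -!mulr_sumr big_split /= -mulr_sumr -mulr_suml.
lra.
Qed.

Lemma first_order_drift_le :
  \sum_(i < b) v i * (sig i * (lam * (s i ^+ 2 - s i.+1 ^+ 2) - (s i.+1 - s i.+2)))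
  <= - (1 - lam) * L + 3 * eta * \sum_(i < b) v i.
Proof.
have [l0 l1] := andP lam01.
apply: le_trans (ler_sum _ (fun (i : 'I_b) _ => smooth_sgn_drift_le (s i) (s i.+2)
  eta_gt0 _ (weight_ge0 b t_ge0 i.+1) (s01 i.+1) (t01 i.+1) (t_fixed (ltn_ord i)))) _.
  by rewrite l0 ltW.
rewrite big_split /= -mulr_sumr lerD2r.
by apply: weighted_telescope_le => //; rewrite l0 ltW.
Qed.

Lemma lyap_drift_le :
  lyap_drift b t eta lam n s <= - (1 - lam) * L ^+ 2 + 26 * b%:R ^+ 10 / ((1 - lam) * n).
Proof.
have [l0 l1] := andP lam01.
have eps01 : 0 < 1 - lam <= 1 by apply/andP; split; lra.
have hL : 0 <= L by rewrite sumr_ge0.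
have hSv := sum_weight_le b t_ge0; have hSv2 := sum_sqr_weight_le b t_ge0.
have hSv0 : 0 <= \sum_(i < b) v i by rewrite sumr_ge0 // => i _; apply: weight_ge0.
have hLH : 0 <= L <= H by rewrite hL dist1_le_wdist.
have := drift_amgm (B := b%:R) (andP eps01).1 eta_gt0 n_gt0 eta_n hLH
  (wdist_le b t_ge0 eta_gt0 s) hSv0 first_order_drift_le lyap_drift_le_first_order.
move/le_trans; apply; rewrite lerD2l drift_remainder_le ?ler1n ?hSv0 //.
Qed.

End Drift.

Section FixedPoint.
Variable R : realFieldType.
Variables (b : nat) (lam : R) (t : nat -> R).
Hypotheses (lam01 : 0 <= lam <= 1) (t0 : t 0%N = 1).
Hypotheses (t_gtb : forall k, (b < k)%N -> t k = 0).
Hypotheses (t_nonincr : forall k, (k <= b)%N -> t k.+1 <= t k).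
Hypothesis t_fixed :
  forall i, (i < b)%N -> lam * (t i ^+ 2 - t i.+1 ^+ 2) - (t i.+1 - t i.+2) = 0.

Lemma fixed_point_ge0 k : 0 <= t k.
Proof.
have desc d j : (j + d <= b.+1)%N -> t (j + d) <= t j.
  elim: d => [|d IH] hd; first by rewrite addn0.
  rewrite addnS in hd *; apply: le_trans _ (IH (ltnW hd)).
  by apply: t_nonincr; rewrite -ltnS.
case: (leqP k b.+1) => hk; last by rewrite t_gtb // ltnW.
by rewrite -(t_gtb (ltnSn b)) -(subnKC hk) desc // subnKC.
Qed.

Lemma fixed_point_le1 k : t k <= 1.
Proof.
elim: k => [|k IH]; first by rewrite t0.
case: (leqP k b) => hk; first exact: le_trans (t_nonincr hk) IH.
by rewrite t_gtb ?ler01 // ltnW.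
Qed.

(* The fixed-point equations say exactly that [t i.+1 - lam * t i ^+ 2] does
   not depend on [i]; at [i = b] it equals [- lam * t b ^+ 2]. *)
Lemma fixed_point_next_le i : (i <= b)%N -> t i.+1 <= lam * t i ^+ 2.
Proof.
pose g j := t j.+1 - lam * t j ^+ 2.
have g_const d : (i + d <= b)%N -> g i = g (i + d)%N.
  elim: d => [|d IH] hd; first by rewrite addn0.
  rewrite addnS in hd *; rewrite IH; last exact: ltnW.
  apply/eqP; rewrite -subr_eq0; apply/eqP.
  by rewrite -[RHS]oppr0 -(t_fixed hd) /g; ring.
move=> hi; have := g_const (b - i)%N; rewrite subnKC // => /(_ (leqnn b)).
rewrite /g (t_gtb (ltnSn b)) sub0r => e.
have : 0 <= lam * t b ^+ 2 by rewrite mulr_ge0 ?sqr_ge0 //; case/andP: lam01.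
lra.
Qed.

Lemma fixed_point_cumprod_le i : (i <= b)%N -> (1 - lam) * cumprod t i <= 1.
Proof.
have [l0 l1] := andP lam01.
have t1 : t 1%N <= lam by have := fixed_point_next_le (leq0n b); rewrite t0 expr1n mulr1.
have claim j : (j < b)%N -> (1 - t 1%N) * cumprod t j.+1 <= 1 - t j.+1 ^+ 2.
  elim: j => [|j IH] hj.
    by rewrite cumprodS /cumprod big_ord0 mul1r; lra.
  rewrite cumprodS mulrA.
  have hp : 0 <= 1 + t j.+2 by have := fixed_point_ge0 j.+2; lra.
  apply: le_trans (ler_wpM2r hp (IH (ltnW hj))) _.
  have ca : t j.+2 <= t j.+1 ^+ 2.
    by apply: le_trans (fixed_point_next_le (ltnW hj)) _; rewrite ler_piMl ?sqr_ge0.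
  by have := fixed_point_ge0 j.+2; nra.
case: i => [|i] hi; first by rewrite /cumprod big_ord0 mulr1; lra.
have hq := cumprod_ge1 fixed_point_ge0 i.+1.
have : (1 - lam) * cumprod t i.+1 <= (1 - t 1%N) * cumprod t i.+1.
  by rewrite ler_wpM2r ?(le_trans ler01 hq) //; lra.
by have := claim i hi; have := sqr_ge0 (t i.+1); lra.
Qed.

End FixedPoint.

Section Asymptotics.
Variable R : realType.

Lemma ln_le_powR_div (x p : R) : 1 <= x -> 0 < p -> ln x <= x `^ p / p.
Proof.
move=> x1 p0; have x0 : 0 < x by apply: lt_le_trans x1.
have : ln (x `^ p) <= x `^ p - 1.
  rewrite -[X in ln X](subrKC 1) le_ln1Dx //.
  by have := powR_gt0 p x0; lra.
by rewrite ln_powR ler_pdivlMr // mulrC; lra.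
Qed.

Lemma pow10_le_of_le_ln (B C n p : R) : 1 <= n -> 0 < p -> 0 <= B ->
  B <= C * ln n -> B ^+ 10 <= (`|C| / p) ^+ 10 * n `^ (10 * p).
Proof.
move=> n1 p0 B0 hB.
rewrite [10 * p]mulrC powRrM powR_mulrn ?powR_ge0 // -exprMn.
rewrite lerXn2r ?nnegrE //; first by rewrite mulr_ge0 ?powR_ge0 // divr_ge0 // ltW.
apply: le_trans hB _; apply: le_trans (_ : `|C| * ln n <= _).
  by rewrite ler_wpM2r ?ln_ge0 // ler_norm.
by rewrite mulrAC -mulrA ler_wpM2l // ln_le_powR_div.
Qed.

Lemma le_powR_eventually (M e : R) : 0 < e ->
  exists N0 : nat, forall N : nat, (N0 <= N)%N -> M <= N%:R `^ e.
Proof.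
move=> e0; exists (Num.truncn (`|M| `^ e^-1)).+1 => N hN.
apply: le_trans (ler_norm M) _.
have -> : `|M| = (`|M| `^ e^-1) `^ e by rewrite -powRrM mulVf ?gt_eqF ?powRr1.
apply: ge0_ler_powR; rewrite ?nnegrE ?powR_ge0 ?ler0n ?(ltW e0) //.
by apply: le_trans (ltW (truncnS_gt _)) _; rewrite ler_nat.
Qed.

Lemma rate_le_eventually (gamma alpha xi C : R) (b : nat -> nat) (N1 : nat) :
  0 < gamma -> 0 <= alpha -> 0 < xi ->
  (forall N, (N1 <= N)%N -> (b N)%:R <= C * ln (N%:R : R)) ->
  exists N0 : nat, forall N : nat, (N0 <= N)%N ->
    26 * (b N)%:R ^+ 10 / ((gamma / N%:R `^ alpha) ^+ 2 * N%:R)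
    <= 1 / N%:R `^ (1 - 4 * alpha - 7 * xi).
Proof.
move=> g0 a0 x0 hb; set p := xi / 10.
have p0 : 0 < p by rewrite divr_gt0.
have x6 : 0 < 6 * xi by rewrite mulr_gt0.
have [N2 hM] := le_powR_eventually (26 * (`|C| / p) ^+ 10 / gamma ^+ 2) x6.
exists (maxn 1 (maxn N1 N2)) => N; rewrite !geq_max => /andP[N_gt0 /andP[hN1 hN2]].
set n := N%:R : R; set B := (b N)%:R : R.
have n1 : 1 <= n by rewrite ler1n.
have n0 : n != 0 by rewrite gt_eqF // (lt_le_trans ltr01 n1).
have hB := pow10_le_of_le_ln n1 p0 (ler0n _ _) (hb N hN1).
rewrite (_ : 10 * p = xi) in hB; last by rewrite /p mulrC divfK.
have -> : 1 / n `^ (1 - 4 * alpha - 7 * xi) = n `^ (4 * alpha) * n `^ (7 * xi) / n.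
  have -> : 1 - 4 * alpha - 7 * xi = 1 - (4 * alpha + 7 * xi) by ring.
  rewrite powRB ?n0 ?implybT // powRr1 ?ler0n // powRD ?n0 ?implybT //.
  by field; rewrite -/n !powR_eq0 (negbTE n0).
have -> : 26 * B ^+ 10 / ((gamma / n `^ alpha) ^+ 2 * n) =
    26 * B ^+ 10 / gamma ^+ 2 * n `^ (2 * alpha) / n.
  rewrite [2 * alpha]mulrC powRrM powR_mulrn ?powR_ge0 //.
  by field; rewrite -/n !powR_eq0 (negbTE n0) gt_eqF.
rewrite ler_pM2r ?invr_gt0 ?(lt_le_trans ltr01 n1) // [X in X <= _]mulrC.
apply: ler_pM; rewrite ?powR_ge0 ?mulr_ge0 ?divr_ge0 ?invr_ge0 ?sqr_ge0 ?ler0n //.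
  by apply: ler_powR => //; lra.
have -> : 7 * xi = 6 * xi + xi by ring.
rewrite powRD ?n0 ?implybT //; apply: le_trans (ler_wpM2r (powR_ge0 _ _) (hM N hN2)).
have -> : 26 * (`|C| / p) ^+ 10 / gamma ^+ 2 * n `^ xi =
    26 * ((`|C| / p) ^+ 10 * n `^ xi) / gamma ^+ 2 by ring.
by rewrite ler_wpM2r ?invr_ge0 ?sqr_ge0 // ler_pM2l.
Qed.

End Asymptotics.

Section MarkovChain.
Variable R : realType.
Variables (N b : nat).
Hypothesis N_gt0 : (0 < N)%N.
Implicit Types (x : {ffun 'I_b -> 'I_N.+1}).

Definition level x (k : nat) : nat := nth 0%N [seq (x i : nat) | i <- enum 'I_b] k.

Lemma sfracS x k : sfrac R x k.+1 = (level x k)%:R / N%:R.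
Proof.
by rewrite /sfrac /level /=; elim: (enum 'I_b) k => [|a s IH] [|k] //=; rewrite mul0r.
Qed.

Lemma level_ord x (i : 'I_b) : level x i = x i.
Proof. by rewrite /level (nth_map i) ?size_enum_ord // nth_ord_enum. Qed.

Lemma level_default x k : (b <= k)%N -> level x k = 0%N.
Proof. by move=> hk; rewrite /level nth_default // size_map size_enum_ord. Qed.

Lemma level_le x k : (level x k <= N)%N.
Proof.
case: (ltnP k b) => hk; last by rewrite level_default.
by rewrite (level_ord x (Ordinal hk)) -ltnS ltn_ord.
Qed.

Lemma level_nonincr x k l : state_ok x -> (k <= l)%N -> (level x l <= level x k)%N.
Proof.
move=> /forallP hx hkl; case: (ltnP l b) => hl; last by rewrite level_default.
have hk : (k < b)%N by apply: leq_ltn_trans hl.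
rewrite (level_ord x (Ordinal hl)) (level_ord x (Ordinal hk)).
by have /forallP /(_ (Ordinal hl)) /implyP := hx (Ordinal hk); apply.
Qed.

Lemma sfrac_ge0 x k : 0 <= sfrac R x k.
Proof. by case: k => [|k]; rewrite ?sfracS ?divr_ge0 ?ler0n. Qed.

Lemma sfrac_le1 x k : sfrac R x k <= 1.
Proof.
have N0 : 0 < N%:R :> R by rewrite ltr0n.
by case: k => [|k] //; rewrite sfracS ler_pdivrMr // mul1r ler_nat level_le.
Qed.

Lemma sfrac_nonincr x k : state_ok x -> sfrac R x k.+1 <= sfrac R x k.
Proof.
have N0 : 0 < N%:R :> R by rewrite ltr0n.
move=> hx; case: k => [|k]; first exact: sfrac_le1.
by rewrite !sfracS ler_pM2r ?invr_gt0 // ler_nat level_nonincr.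
Qed.

Lemma sfrac_default x : sfrac R x b.+1 = 0.
Proof. by rewrite sfracS level_default // mul0r. Qed.

Lemma sext_ord (s : 'I_b -> R) (i : 'I_b) : sext s i.+1 = s i.
Proof. by rewrite /sext /= (nth_map i) ?size_enum_ord // nth_ord_enum. Qed.

Lemma sext_default (s : 'I_b -> R) k : (b < k)%N -> sext s k = 0.
Proof.
by case: k => // k hk; rewrite /sext /= nth_default // size_map size_enum_ord.
Qed.

End MarkovChain.

Section Generator.
Variable R : realType.
Variables (N b : nat) (lam : R).
Implicit Types (y z : state N b) (V : state N b -> R).

Definition generator V y : R :=
  \sum_(z | z != y) rate lam (val y) (val z) * (V z - V y).

Lemma stationary_generator_mean pi V :
  is_stationary lam pi -> \sum_y pi y * generator V y = 0.
Proof.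
case=> _ [_ balance].
have -> : \sum_y pi y * generator V y =
   \sum_y \sum_(z | z != y) pi y * rate lam (val y) (val z) * V z -
   \sum_y pi y * V y * \sum_(z | z != y) rate lam (val y) (val z).
  rewrite -sumrB; apply: eq_bigr => y _; rewrite /generator !mulr_sumr -sumrB.
  by apply: eq_bigr => z _; ring.
rewrite (exchange_big_dep predT) //=; apply/eqP; rewrite subr_eq0; apply/eqP.
apply: eq_bigr => z _; rewrite mulrAC -balance mulr_suml.
by apply: eq_big => y; [rewrite eq_sym | move=> _; ring].
Qed.

Lemma sum_rate_single (P : pred (state N b)) (c : R) (F : state N b -> R) y z0 :
  P z0 -> z0 != y -> (forall z, P z -> z = z0) ->
  \sum_(z | z != y) (if P z then c else 0) * F z = c * F z0.
Proof.
move=> hP hne hu; rewrite (bigD1 z0) //= hP big1 ?addr0 // => z /andP[_ hz].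
by case: ifP => [/hu e|]; [rewrite e eqxx in hz | rewrite mul0r].
Qed.

End Generator.

Section Neighbours.
Variable R : realType.
Variables (N b : nat).
Hypothesis N_gt0 : (0 < N)%N.
Implicit Types (y : state N b).

Lemma state_ok_le (x : {ffun 'I_b -> 'I_N.+1}) (a c : 'I_b) :
  state_ok x -> (a <= c)%N -> (x c <= x a)%N.
Proof. by move=> /forallP /(_ a) /forallP /(_ c) /implyP. Qed.

Lemma arrival_state y (i : 'I_b) : sfrac R (val y) i != sfrac R (val y) i.+1 ->
  exists z : state N b, forall j : 'I_b, (val z j : nat) = (val y j + (j == i))%N.
Proof.
move=> hs; set x := val y; have hx : state_ok x := valP y.
set top := if (i : nat) == 0%N then N else level x i.-1.
have htop : (x i < top)%N.
  have hsi : sfrac R x i = top%:R / N%:R.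
    rewrite /top; case: (nat_of_ord i) => [|i'] /=; last by rewrite sfracS.
    by rewrite divff // pnatr_eq0 -lt0n.
  have le : (x i <= top)%N.
    rewrite -(level_ord x i) /top; case: ifP => _; first exact: level_le.
    by apply: level_nonincr => //; exact: leq_pred.
  rewrite ltn_neqAle le andbT; apply: contra_neq hs => e.
  by rewrite hsi sfracS level_ord e.
pose f := [ffun j : 'I_b => (inord (x j + (j == i)) : 'I_N.+1)].
have fv j : (f j : nat) = (x j + (j == i))%N.
  rewrite ffunE inordK //; case: (eqVneq j i) => [->|_]; last by rewrite addn0.
  by rewrite addn1 ltnS (leq_trans htop) // /top; case: ifP => // _; exact: level_le.
have fok : state_ok f.
  apply/forallP => a; apply/forallP => c; apply/implyP => hac; rewrite !fv.
  have := state_ok_le hx hac.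
  case: (eqVneq c i) => [eci|_]; case: (eqVneq a i) => [eai|nai] /=; try lia.
  subst c; have hai : (a < i)%N by rewrite ltn_neqAle hac andbT; exact: nai.
  have i0 : (0 < i)%N by apply: leq_ltn_trans hai.
  have hai' : (a <= i.-1)%N by rewrite -ltnS prednK.
  move: htop; rewrite /top gtn_eqF // => htop.
  by have := level_nonincr hx hai'; rewrite level_ord; lia.
by exists (exist _ f fok).
Qed.

Lemma departure_state y (i : 'I_b) : sfrac R (val y) i.+1 != sfrac R (val y) i.+2 ->
  exists z : state N b, forall j : 'I_b, (val z j + (j == i))%N = val y j.
Proof.
move=> hs; set x := val y; have hx : state_ok x := valP y.
have hlt : (level x i.+1 < x i)%N.
  rewrite -(level_ord x i) ltn_neqAle level_nonincr // andbT.
  by apply: contra_neq hs => e; rewrite !sfracS e.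
pose f := [ffun j : 'I_b => (inord (x j - (j == i)) : 'I_N.+1)].
have fv j : (f j : nat) = (x j - (j == i))%N.
  by rewrite ffunE inordK // ltnS (leq_trans (leq_subr _ _)) // -ltnS ltn_ord.
have fok : state_ok f.
  apply/forallP => a; apply/forallP => c; apply/implyP => hac; rewrite !fv.
  have := state_ok_le hx hac.
  case: (eqVneq c i) => [_|nci]; case: (eqVneq a i) => [eai|_] /=; try lia.
  subst a; have hic : (i < c)%N by rewrite ltn_neqAle hac andbT eq_sym; exact: nci.
  by have := level_nonincr hx hic; rewrite level_ord; lia.
exists (exist _ f fok) => j /=; rewrite fv subnK //.
by case: (eqVneq j i) => [->|]; [apply: leq_ltn_trans hlt | rewrite ?leq0n].
Qed.

End Neighbours.

Section GeneratorCoordinates.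
Variable R : realType.
Variables (N b : nat) (lam : R) (V : (nat -> R) -> R).
Hypothesis N_gt0 : (0 < N)%N.
Hypothesis V_ext :
  forall s s', (forall k, (k < b)%N -> s k.+1 = s' k.+1) -> V s = V s'.
Implicit Types (y z : state N b).
Local Notation s x := (sfrac R (val x)).

Lemma generator_arrival y (i : 'I_b) :
  \sum_(z | z != y) (if [forall j : 'I_b, (val z j : nat) == (val y j + (j == i))%N]
      then lam * N%:R * (s y i ^+ 2 - s y i.+1 ^+ 2) else 0) * (V (s z) - V (s y))
  = lam * N%:R * (s y i ^+ 2 - s y i.+1 ^+ 2)
    * (V (shift_at (s y) i.+1 N%:R^-1) - V (s y)).
Proof.
set c := lam * _ * _.
have [->|hc] := eqVneq c 0.
  by rewrite mul0r big1 // => z _; rewrite if_same mul0r.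
have hs : s y i != s y i.+1 by apply: contra_neq hc => e; rewrite /c e subrr mulr0.
have [z0 hz0] := arrival_state N_gt0 hs.
rewrite (@sum_rate_single R N b _ _ _ y z0).
- congr (_ * (_ - _)); apply: V_ext => k hk.
  rewrite /shift_at !sfracS !(level_ord _ (Ordinal hk)) hz0 eqSS /=.
  rewrite (_ : (Ordinal hk == i) = (k == i)) //.
  by case: (k == i); rewrite ?addn0 // addn1 -natr1 mulrDl mul1r.
- by apply/forallP => j; rewrite hz0.
- by apply/eqP => e; have := hz0 i; rewrite e eqxx; lia.
- move=> z /forallP hz; apply: val_inj; apply/ffunP => j; apply: val_inj.
  by change ((val z j : nat) = val z0 j); rewrite (eqP (hz j)) hz0.
Qed.

Lemma generator_departure y (i : 'I_b) :
  \sum_(z | z != y) (if [forall j : 'I_b, ((val z j : nat) + (j == i))%N == val y j]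
      then N%:R * (s y i.+1 - s y i.+2) else 0) * (V (s z) - V (s y))
  = N%:R * (s y i.+1 - s y i.+2) * (V (shift_at (s y) i.+1 (- N%:R^-1)) - V (s y)).
Proof.
set c := N%:R * _.
have [->|hc] := eqVneq c 0.
  by rewrite mul0r big1 // => z _; rewrite if_same mul0r.
have hs : s y i.+1 != s y i.+2 by apply: contra_neq hc => e; rewrite /c e subrr mulr0.
have [z0 hz0] := departure_state N_gt0 hs.
rewrite (@sum_rate_single R N b _ _ _ y z0).
- congr (_ * (_ - _)); apply: V_ext => k hk.
  rewrite /shift_at !sfracS !(level_ord _ (Ordinal hk)) -hz0 eqSS /=.
  rewrite (_ : (Ordinal hk == i) = (k == i)) //.
  by case: (k == i); rewrite ?addn0 // addn1 -natr1 mulrDl mul1r addrK.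
- by apply/forallP => j; rewrite hz0.
- by apply/eqP => e; have := hz0 i; rewrite e eqxx; lia.
- move=> z /forallP hz; apply: val_inj; apply/ffunP => j; apply: val_inj.
  change ((val z j : nat) = val z0 j).
  by apply/eqP; rewrite -(eqn_add2r (j == i)) hz0 (eqP (hz j)).
Qed.

Lemma generator_coordinates y :
  generator lam (fun z => V (s z)) y =
  \sum_(i < b) (lam * N%:R * (s y i ^+ 2 - s y i.+1 ^+ 2)
                  * (V (shift_at (s y) i.+1 N%:R^-1) - V (s y))
              + N%:R * (s y i.+1 - s y i.+2)
                  * (V (shift_at (s y) i.+1 (- N%:R^-1)) - V (s y))).
Proof.
rewrite /generator /rate; under eq_bigr do rewrite mulr_suml.
rewrite exchange_big /=; apply: eq_bigr => i _.
under eq_bigr do rewrite mulrDl.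
by rewrite big_split /= generator_arrival generator_departure.
Qed.

End GeneratorCoordinates.

Lemma lambdaN_ge0_lt1 (R : realType) (gamma alpha : R) (N : nat) :
  0 < gamma <= 1 -> 0 <= alpha -> (0 < N)%N -> 0 <= lambdaN gamma alpha N < 1.
Proof.
move=> /andP[g0 g1] a0 N0.
have hNa : 1 <= N%:R `^ alpha.
  by rewrite -[X in X <= _](powRr0 N%:R) ler_powR // ler1n.
have Na0 : 0 < N%:R `^ alpha := lt_le_trans ltr01 hNa.
have ga0 : 0 < gamma / N%:R `^ alpha by rewrite divr_gt0.
have ga1 : gamma / N%:R `^ alpha <= 1.
  by rewrite ler_pdivrMr // mul1r (le_trans g1).
by rewrite /lambdaN; apply/andP; split; lra.
Qed.

Section Stationary.
Variable R : realType.
Variables (N b : nat) (lam : R) (pi : state N b -> R).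
Hypotheses (N_gt0 : (0 < N)%N) (b_gt0 : (1 <= b)%N) (lam01 : 0 <= lam < 1).
Hypothesis pi_stationary : is_stationary lam pi.

Lemma stationary_dist1_sqr_le (t : nat -> R) :
  t 0%N = 1 -> (forall k, 0 <= t k <= 1) -> t b.+1 = 0 ->
  (forall i, (i < b)%N -> lam * (t i ^+ 2 - t i.+1 ^+ 2) - (t i.+1 - t i.+2) = 0) ->
  (forall i, (i <= b)%N -> (1 - lam) * cumprod t i <= 1) ->
  \sum_x pi x * dist1 b t (sfrac R (val x)) ^+ 2
  <= 26 * b%:R ^+ 10 / ((1 - lam) ^+ 2 * N%:R).
Proof.
move=> t0 t01 tb t_fixed cumprod_le.
have [pi_ge0 [pi_sum1 _]] := pi_stationary.
set n := N%:R : R; have n0 : 0 < n by rewrite ltr0n.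
(* [eta = N^(-1/2)] balances the smoothing error [eta] of [smooth_abs] against
   its curvature [1 / eta] at jumps of size [1 / N]. *)
set eta := (Num.sqrt n)^-1.
have eta0 : 0 < eta by rewrite invr_gt0 sqrtr_gt0.
have eta_n : eta ^+ 2 * n = 1 by rewrite exprVn sqr_sqrtr ?mulVf ?gt_eqF ?ltW.
set K := 26 * b%:R ^+ 10 / ((1 - lam) * n).
pose L (x : state N b) := dist1 b t (sfrac R (val x)).
have drift x : pi x * generator lam (fun z => lyap b t eta (sfrac R (val z))) x
    <= pi x * (- (1 - lam) * L x ^+ 2 + K).
  rewrite ler_wpM2l // generator_coordinates //; last exact: lyap_ext.
  apply: lyap_drift_le; rewrite ?sfrac_default //.
    by move=> k; rewrite sfrac_ge0 sfrac_le1.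
  by move=> k; apply/sfrac_nonincr/valP.
have : 0 <= \sum_x pi x * (- (1 - lam) * L x ^+ 2 + K).
  rewrite -[X in X <= _](stationary_generator_mean
    (fun z => lyap b t eta (sfrac R (val z))) pi_stationary).
  by apply: ler_sum => x _; exact: drift.
rewrite (eq_bigr (fun x => - (1 - lam) * (pi x * L x ^+ 2) + K * pi x)); last first.
  by move=> x _; ring.
rewrite big_split /= -!mulr_sumr pi_sum1 mulr1 => h.
have eps0 : 0 < 1 - lam by rewrite subr_gt0; case/andP: lam01.
have -> : 26 * b%:R ^+ 10 / ((1 - lam) ^+ 2 * n) = K / (1 - lam).
  by rewrite /K; field; rewrite !gt_eqF.
by rewrite ler_pdivlMr // mulrC; lra.
Qed.

End Stationary.

Lemma stationary_mean_sqr_dist_le (R : realType) (N b : nat) (lam : R)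
    (pi : state N b -> R) (sstar : 'I_b -> R) :
  (0 < N)%N -> (1 <= b)%N -> 0 <= lam < 1 ->
  is_stationary lam pi -> is_fixed_point lam sstar ->
  \sum_x pi x * (\sum_(i < b) (sfrac R (val x) i.+1 - sstar i) ^+ 2)
  <= 26 * b%:R ^+ 10 / ((1 - lam) ^+ 2 * N%:R).
Proof.
move=> N_gt0 b_gt0 lam01 pi_st [t_nonincr t_fixed].
have lam_le1 : 0 <= lam <= 1 by case/andP: lam01 => -> /ltW.
have t0 : sext sstar 0 = 1 by [].
have t_gtb k : (b < k)%N -> sext sstar k = 0 by exact: sext_default.
have t_fixed' i : (i < b)%N -> lam * (sext sstar i ^+ 2 - sext sstar i.+1 ^+ 2)
    - (sext sstar i.+1 - sext sstar i.+2) = 0 by move=> hi; exact: t_fixed (Ordinal hi).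
apply: le_trans (stationary_dist1_sqr_le N_gt0 b_gt0 lam01 pi_st _ _ _ t_fixed' _) => //.
- apply: ler_sum => x _; rewrite ler_wpM2l //; first by case: pi_st.
  rewrite (eq_bigr (fun i : 'I_b => (sfrac R (val x) i.+1 - sext sstar i.+1) ^+ 2)).
    exact: (sum_sqr_le_sqr_sum_norm b (fun k => sfrac R (val x) k.+1 - sext sstar k.+1)).
  by move=> i _; rewrite sext_ord.
- by move=> k; rewrite (fixed_point_ge0 t_gtb t_nonincr) (fixed_point_le1 t0 t_gtb t_nonincr).
- exact: t_gtb.
- exact: fixed_point_cumprod_le lam_le1 t0 t_gtb t_nonincr t_fixed'.
Qed.

Theorem lemma1 (R : realType) (gamma alpha xi : R) (b : nat -> nat) :
  0 < gamma <= 1 -> 0 < alpha < 1 / 4 -> 0 < xi ->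
  (forall N, (1 <= b N)%N) ->
  (exists C : R, exists N1 : nat, forall N : nat, (N1 <= N)%N ->
      (b N)%:R <= C * ln (N%:R : R)) ->
  exists N0 : nat, forall N : nat, (N0 <= N)%N ->
    forall pi : state N (b N) -> R,
      is_stationary (lambdaN gamma alpha N) pi ->
    forall sstar : 'I_(b N) -> R,
      is_fixed_point (lambdaN gamma alpha N) sstar ->
      \sum_(x : state N (b N))
         pi x * (\sum_(i < b N) (sfrac R (val x) i.+1 - sstar i) ^+ 2)
      <= 1 / (N%:R `^ (1 - 4 * alpha - 7 * xi)).
Proof.
move=> g01 /andP[a0 _] x0 b_gt0 [C [N1 hC]].
have [N0 hN0] := rate_le_eventually (andP g01).1 (ltW a0) x0 hC.
exists (maxn 1 N0) => N; rewrite geq_max => /andP[N_gt0 hN] pi pi_st sstar fp.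
have lam01 := lambdaN_ge0_lt1 g01 (ltW a0) N_gt0.
have e : 1 - lambdaN gamma alpha N = gamma / N%:R `^ alpha by rewrite /lambdaN; ring.
apply: le_trans (hN0 N hN).
by rewrite -e stationary_mean_sqr_dist_le.
Qed.
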